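(* Let $S\subseteq\Sigma^*$ be a task and, for $i\in\{1,2\}$, let $h_i:\Sigma^*\to\mathbb{R}^{|\Sigma|}$ be language models with $\|h_1-h_2\|<\Delta$ on $S$ for some $\Delta>0$. For $i\in\{1,2\}$ let $K_i=(\mathbb{V}_i,U,\mathbb{F}_i,\succ)$ be a circuit of $h_i$ on $S$, let $R_i$ be an $(L_i,\delta_i)$-representation of $K_i$ obtained through an alignment map $\rho_i$, and let $A_i$ be an $\eta_i$-faithful interpretation of $K_i$. Let $\Pi$ and $\Pi_\star$ be alignment classes mapping (subsets of) $K_1$'s variables $\mathbb{V}_1$ onto the variables of $A_1$ and $A_2$ respectively, so that $\Pi^{-1}(A_1)$ and $\Pi_\star^{-1}(A_2)$ are sets of implementations over $(\mathbb{V}_1,U)$. Assume: (i) there is a map $\Phi$ (a distillation map) such that the implementation distance is $d(F,\tilde F)=\|\Phi\mathbb{V}_1^{F}-\Phi\mathbb{V}_1^{\tilde F}\|$ for implementations $F,\tilde F$ over $\mathbb{V}_1$; (ii) there are $\omega>0$ and a $1$-Lipschitz map $\Psi$ such that for all such implementations $F,\tilde F$ (including $\mathbb{F}_1$), writing $R_F$ for the representation of $(\mathbb{V}_1,U,F,\cdot)$ under $\rho_1$ and $H^F$ for the concatenation of all its hidden variable solutions, $\|\Psi H^F-\Psi H^{\tilde F}\|\le d_{\mathrm{repr}}(R_F,R_{\tilde F})$ and $\|\Phi\mathbb{V}_1^{F}-\Psi H^F\|<\omega$; (iii) there exists $F^\star\in\Pi_\star^{-1}(A_2)$ whose representation $R_{F^\star}$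 under $\rho_1$ is an $(L_1,\delta_1)$-representation. Then $$d_{\mathrm{interp}}(A_1,A_2)\le \kappa(A_1,K_1,\Pi)+\kappa(A_2,K_1,\Pi_\star)+2\omega+d_{\mathrm{repr}}(R_1,R_2)+\delta_1+\delta_2+\Delta,$$ where $d_{\mathrm{interp}}(A_1,A_2)=d_H(\Pi^{-1}(A_1),\Pi_\star^{-1}(A_2))$.
   Context: $\Sigma$ is an alphabet, $\Sigma^*$ the set of finite strings over it; a language model is a map $h:\Sigma^*\to\mathbb{R}^{|\Sigma|}$ and a task is a subset $S\subseteq\Sigma^*$. A deterministic causal model is a quadruple $(\mathbb{V},U,\mathbb{F},\succ)$ with hidden variables $\mathbb{V}=(v_1,\dots,v_m)$, an input variable $U$, functions $\mathbb{F}=(f_1,\dots,f_m)$ and a partial order $\succ$ on $\mathbb{V}$, where $v_k:=f_k(\mathrm{Pa}(v_k),U)$ with $\mathrm{Pa}(v_k)\subseteq\{v\in\mathbb{V}:v\succ v_k\}$. For an input value $u$, $\mathbb{V}^{\mathbb{F}}(u)$ is the unique solution (values of all variables consistent with $u$ and $\mathbb{F}$) and $v_k^{\mathbb{F}}$ is regarded as a function of the input. An intervention $\mathrm{do}(v_k\leftarrow\tilde f)$ replaces the equation of $v_k$ by $v_k:=\tilde f(\widetilde{\mathrm{Pa}}(v_k),U)$ with $\widetilde{\mathrm{Pa}}(v_k)\subseteq\{v:v\succ v_k\}$; $\mathcal{I}(v_k)$ is the set of such interventions and $\mathcal{I}(\mathbb{V})$ the set of interventions on variables of $\mathbb{V}$.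 A causal model $K_2=(\tilde{\mathbb{V}},\tilde U,\tilde{\mathbb{F}},\succ_2)$ abstracts $K_1=(\mathbb{V},U,\mathbb{F},\succ_1)$ if there are surjective maps $\pi:\mathrm{SubsetsOf}(\mathbb{V})\to\tilde{\mathbb{V}}$ and $\omega:\mathcal{I}(\mathbb{V})\to\mathcal{I}(\tilde{\mathbb{V}})$ with $\tilde v_k=\pi\big(\bigcup_{v_k\in\pi^{-1}(\tilde v_k)}f_k(\mathrm{Pa}(v_k),U)\big)$ for all $\tilde v_k\in\tilde{\mathbb{V}}$, and $\pi(\mathrm{do}(v_k\leftarrow f))=\mathrm{do}(\pi(v_k)\leftarrow\omega(f))$ for all $v_k\in\mathbb{V}$, $\mathrm{do}(v_k\leftarrow f)\in\mathcal{I}(v_k)$; such $\pi$ is an alignment. An $m$-circuit of $h$ on $S$ is a causal model with $m$ hidden variables whose input $U$ is $S$-valued, whose hidden variables are real-vector-valued ($v_k\in\mathbb{R}^{n_k}$), and which has a terminal output variable $v_{\mathrm{out}}$ (no variable below it) with $v_{\mathrm{out}}^{\mathbb{F}}(s)=h(s)$ for all $s\in S$. A causal model $A=(\mathbb{V}^\star,U,\mathbb{F}^\star,\succ)$ abstracting a circuit $K$ is an $\eta$-faithful interpretation of $K$ if it has an output variable $v^\star_{\mathrm{out}}$ with $\|v^{\star,\mathbb{F}^\star}_{\mathrm{out}}-v^{\mathbb{F}}_{\mathrm{out}}\|<\eta$ on $S$. Given a circuit with variables $(\mathbb{V},U)$, an interpretation $A$ and a class $\Pi$ of alignments from $\mathrm{SubsetsOf}(\mathbb{V})$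 to $A$'s variables, $F$ is an implementation of $A$ if for some $\pi\in\Pi$, $A$ is an $\eta$-faithful interpretation of $(\mathbb{V},U,F,\succ_F)$ under $\pi$; $\Pi^{-1}(A)$ denotes the set of implementations. With a (pseudo)metric $d$ on implementations, the interpretive compression is $\kappa(A,K,\Pi)=\sup_{F,F'\in\Pi^{-1}(A)}d(F,F')$, and $d_H$ is the Hausdorff distance induced by $d$. An $(L,\delta)$-representation of a circuit $K$ of $h$ on $S$ is an $L$-circuit of $h$ abstracting $K$ (through an alignment $\rho$) whose hidden variables form a chain: $\mathrm{Pa}(v_1)=\{U\}$, $\mathrm{Pa}(v_{k+1})=\{v_k\}$, $v_L=v_{\mathrm{out}}$, and for each $k$ there are linear maps $A_k:\mathbb{R}^{n_k}\to\mathbb{R}^{|\Sigma|}$, $B_k:\mathbb{R}^{|\Sigma|}\to\mathbb{R}^{n_k}$ with operator norms $\le1$ and $\|A_kv_k^{\mathbb{F}}-h\|<\delta$, $\|B_kh-v_k^{\mathbb{F}}\|<\delta$ (norms of functions on $S$). For representations $R_1,R_2$ with $H_i$ the concatenation (direct sum) of all hidden-variable solutions of $R_i$, $d_{\mathrm{repr}}(R_1,R_2)=\max\big(\inf_{\|A\|_{\mathrm{op}}\le1}\|AH_1-H_2\|,\ \inf_{\|B\|_{\mathrm{op}}\le1}\|H_1-BH_2\|\big)$ over linear operators $A,B$, with $\|\cdot\|$ a direct-sum norm. *)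

From mathcomp Require Import all_boot all_order all_algebra.
From mathcomp Require Import all_classical all_reals ereal.

Unset Implicit Arguments.
Unset Strict Implicit.
Unset Printing Implicit Defensive.

Import Order.TTheory GRing.Theory Num.Theory.
Local Open Scope classical_set_scope.
Local Open Scope ring_scope.

(* Finite-dimensional real vectors.  R^I is modelled as I -> R for a   *)
(* finite index type I; R^n is 'I_n -> R.  The vector norm is the     *)
(* max-norm; on a concatenation (direct sum) of blocks the max-norm   *)
(* coincides with the max of the block norms (an l^oo direct-sum      *)
(* norm).                                                             *)

Definition vec (R : realType) (n : nat) := 'I_n -> R.

Definition vnorm {R : realType} {I : finType} (x : I -> R) : R :=
  \big[Num.max/0]_(i : I) `|x i|.

Definition vcast {R : realType} {m : nat} (n : nat) (v : vec R m) : vec R n :=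
  fun i => match @insub nat (fun k => k < m)%N _ (nat_of_ord i) with
           | Some j => v j
           | None => 0
           end.

Definition linmap (R : realType) (I J : finType) := J -> I -> R.

Definition lapp {R : realType} {I J : finType} (a : linmap R I J) (x : I -> R)
  : J -> R := fun j => \sum_(i : I) a j i * x i.

Definition opnorm_le1 {R : realType} {I J : finType} (a : linmap R I J) :=
  forall x : I -> R, vnorm (lapp a x) <= vnorm x.

Definition tcast {A B : Type} (e : A = B) (x : A) : B :=
  match e in _ = T return T with erefl => x end.

Section Models.
Context {R : realType} {Sigma : finType}.

Definition LM := seq Sigma -> vec R #|Sigma|.

Variable S : set (seq Sigma).

(* Norm of a (vector-valued) function on S: sup_{s in S} of the vector
   norm (extended-real valued; the sup over the empty task is 0). *)
Definition fnorm {I : finType} (f : seq Sigma -> I -> R) : \bar R :=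
  ereal_sup ([set 0%E] `|` [set (vnorm (f s))%:E | s in S]).

(* Deterministic causal models (V, U, F, >-) with hidden variables     *)
(* v_0..v_{m-1} of arbitrary value types, input U ranging over        *)
(* strings.  [cm_prec j k] means  v_j >- v_k  (v_j is above v_k).      *)
Record cmodel := CM {
  cm_m : nat;
  cm_T : 'I_cm_m -> Type;
  cm_prec : rel 'I_cm_m;
  cm_f : forall k : 'I_cm_m, (forall j, cm_T j) -> seq Sigma -> cm_T k }.

Definition is_sol (K : cmodel) (u : seq Sigma) (V : forall j, cm_T K j) :=
  forall k, V k = cm_f K k V u.

(* well-formedness: >- is a strict partial order, Pa(v_k) is contained in
   {v : v >- v_k}, and for every input of the task there is a unique
   solution V^F(u). *)
Definition cm_wf (K : cmodel) :=
  [/\ irreflexive (cm_prec K), transitive (cm_prec K),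
      (forall k V V' u, (forall j, cm_prec K j k -> V j = V' j) ->
          cm_f K k V u = cm_f K k V' u)
    & forall u, S u -> exists! V, is_sol K u V].

Definition solo (K : cmodel) (u : seq Sigma) : option (forall j, cm_T K j) :=
  match pselect (exists V, is_sol K u V) with
  | left H => Some (proj1_sig (cid H))
  | right _ => None
  end.

Definition alignment (K A : cmodel) := {set 'I_(cm_m K)} -> 'I_(cm_m A).

(* Abstraction: pi is surjective and [cons K A pi] holds, where [cons] is
   the (interventional-consistency) part of the paper's definition of
   abstraction, kept as a parameter. *)
Definition abstracts
  (cons : forall K A : cmodel, alignment K A -> Prop)
  (K A : cmodel) (pi : alignment K A) :=
  (forall y, exists x, pi x = y) /\ cons K A pi.

Record circ (m : nat) (n : 'I_m -> nat) := Circ {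
  c_prec : rel 'I_m;
  c_f : forall k : 'I_m, (forall j, vec R (n j)) -> seq Sigma -> vec R (n k) }.
Arguments c_prec {m n}.
Arguments c_f {m n}.

Definition to_cm {m n} (F : circ m n) : cmodel :=
  @CM m (fun k => vec R (n k)) (c_prec F) (c_f F).

Definition csol {m n} (F : circ m n) : seq Sigma -> forall j, vec R (n j) :=
  fun u => match solo (to_cm F) u with
           | Some V => V
           | None => fun j _ => 0
           end.

Definition is_circ_of {m n} (h : LM) (F : circ m n) (o : 'I_m) :=
  [/\ cm_wf (to_cm F), (forall j, ~~ c_prec F o j), n o = #|Sigma|
    & forall s, S s -> vcast #|Sigma| (csol F s o) = h s].

Definition aout {A : cmodel} {o : 'I_(cm_m A)} (e : cm_T A o = vec R #|Sigma|)
  : seq Sigma -> vec R #|Sigma| :=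
  fun s => match solo A s with
           | Some V => tcast e (V o)
           | None => fun _ => 0
           end.

Variable cons : forall K A : cmodel, alignment K A -> Prop.

Definition faithful_interp {m n} (A : cmodel) (F : circ m n) (o : 'I_m)
  (pi : alignment (to_cm F) A) (eta : R) :=
  [/\ cm_wf A, (exists h, is_circ_of h F o), abstracts cons (to_cm F) A pi
    & exists oA (e : cm_T A oA = vec R #|Sigma|),
        (fnorm (fun s i => (aout e s i - vcast #|Sigma| (csol F s o) i)%R)
           < eta%:E)%E].

Definition impls {m} n (o : 'I_m) (A : cmodel)
  (Pi : set ({set 'I_m} -> 'I_(cm_m A))) (eta : R) : set (circ m n) :=
  [set F | exists pi, Pi pi /\ faithful_interp A F o pi eta].

(* Chain structure: Pa(v_0) = {U}, Pa(v_{k+1}) = {v_k}. *)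
Definition chain {L} {nR : 'I_L -> nat} (Rp : circ L nR) :=
  forall (k : 'I_L) V V' u u',
    (forall j : 'I_L, (nat_of_ord j).+1 = nat_of_ord k -> V j = V' j) ->
    (nat_of_ord k = 0%N -> u = u') ->
    c_f Rp k V u = c_f Rp k V' u'.

Definition is_repr {m n} (h : LM) (K : circ m n) (o : 'I_m)
  {L} {nR : 'I_L -> nat} (Rp : circ L nR) (rho : {set 'I_m} -> 'I_L)
  (delta : R) :=
  [/\ is_circ_of h K o,
      exists oR : 'I_L, nat_of_ord oR = L.-1 /\ is_circ_of h Rp oR,
      chain Rp,
      abstracts cons (to_cm K) (to_cm Rp) rho
    & forall k : 'I_L, exists (a : linmap R 'I_(nR k) 'I_#|Sigma|)
                              (b : linmap R 'I_#|Sigma| 'I_(nR k)),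
        [/\ opnorm_le1 a, opnorm_le1 b,
            (fnorm (fun s i => (lapp a (csol Rp s k) i - h s i)%R) < delta%:E)%E
          & (fnorm (fun s i => (lapp b (h s) i - csol Rp s k i)%R) < delta%:E)%E]].

Definition ordF {L} (nR : 'I_L -> nat) : 'I_L -> finType := fun k => 'I_(nR k).
Definition hidx {L} (nR : 'I_L -> nat) : finType := {k : 'I_L & ordF nR k}.

Definition Hcat {L} {nR : 'I_L -> nat} (Rp : circ L nR)
  : seq Sigma -> hidx nR -> R :=
  fun s p => csol Rp s (tag p) (tagged p).

Definition drepr {L1} {n1 : 'I_L1 -> nat} (R1 : circ L1 n1)
  {L2} {n2 : 'I_L2 -> nat} (R2 : circ L2 n2) : \bar R :=
  maxe
    (ereal_inf [set fnorm (fun s i => lapp a (Hcat R1 s) i - Hcat R2 s i)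
               | a in [set a : linmap R (hidx n1) (hidx n2) | opnorm_le1 a]])
    (ereal_inf [set fnorm (fun s i => Hcat R1 s i - lapp b (Hcat R2 s) i)
               | b in [set b : linmap R (hidx n2) (hidx n1) | opnorm_le1 b]]).

Definition kappa {T : Type} (d : T -> T -> R) (P : set T) : \bar R :=
  ereal_sup [set (d F F')%:E | F in P & F' in P].

Definition dHaus {T : Type} (d : T -> T -> R) (P Q : set T) : \bar R :=
  maxe (ereal_sup [set ereal_inf [set (d F F')%:E | F' in Q] | F in P])
       (ereal_sup [set ereal_inf [set (d F F')%:E | F in P] | F' in Q]).

End Models.

(** Let [Fs] be the implementation of [A2] given by (iii).  Every
    [delta]-representation is [delta]-close to its language model in both
    directions through contractions, and the one-sided distance "up to a
    contraction" satisfies the triangle inequality; going from [R1] to [R2],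
    then to [h2], [h1] and the representation of [Fs] gives
    [d_repr(R1, R_Fs) <= d_repr(R1, R2) + delta1 + delta2 + Delta].  By (ii),
    [d(K1, Fs) <= 2 omega + d_repr(R1, R_Fs)].  Every element of [Pi^-1(A1)]
    is within [kappa] of [K1] and every element of the second class within
    [kappa] of [Fs], which bounds both halves of the Hausdorff distance. *)

From mathcomp Require Import all_boot all_order all_algebra.
From mathcomp Require Import all_classical all_reals ereal normedtype lra.

Import Order.TTheory GRing.Theory Num.Theory.
Import numFieldNormedType.Exports.
Local Open Scope classical_set_scope.
Local Open Scope ring_scope.

Section MaxNorm.
Context {R : realType}.

Lemma vnorm_ge0 {I : finType} (x : I -> R) : 0 <= vnorm x.
Proof.
apply: (big_ind (fun y => 0 <= y)) => // a b a0 b0.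
by rewrite le_max a0.
Qed.

Lemma vnorm_ge_abs {I : finType} (x : I -> R) i : `|x i| <= vnorm x.
Proof. by rewrite /vnorm (bigD1 i) //= le_max lexx. Qed.

Lemma vnorm_le {I : finType} (x : I -> R) c :
  0 <= c -> (forall i, `|x i| <= c) -> vnorm x <= c.
Proof.
move=> c0 xc; apply: (big_ind (fun y => y <= c)) => // a b ac bc.
by rewrite ge_max ac bc.
Qed.

Lemma vnorm_distC {I : finType} (x y : I -> R) :
  vnorm (fun i => x i - y i) = vnorm (fun i => y i - x i).
Proof. by apply: eq_bigr => i _; rewrite distrC. Qed.

Lemma vnorm_distD {I : finType} (x y z : I -> R) :
  vnorm (fun i => x i - z i)
    <= vnorm (fun i => x i - y i) + vnorm (fun i => y i - z i).
Proof.
apply: vnorm_le => [|i]; first by rewrite addr_ge0 ?vnorm_ge0.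
by rewrite (le_trans (ler_distD (y i) _ _)) // lerD ?vnorm_ge_abs.
Qed.

End MaxNorm.

Section Contractions.
Context {R : realType}.

Lemma lappB {I J : finType} (a : linmap R I J) x y :
  lapp a (fun i => x i - y i) = fun j => lapp a x j - lapp a y j.
Proof.
apply/boolp.funext => j.
by rewrite /lapp -sumrB; apply: eq_bigr => i _; rewrite mulrBr.
Qed.

Lemma opnorm_le1_dist {I J : finType} (a : linmap R I J) x y :
  opnorm_le1 a ->
  vnorm (fun j => lapp a x j - lapp a y j) <= vnorm (fun i => x i - y i).
Proof.
by move=> a1; rewrite -lappB; exact: a1.
Qed.

Definition lcomp {I J K : finType} (a : linmap R J K) (b : linmap R I J)
  : linmap R I K := fun k i => \sum_j a k j * b j i.

Lemma lapp_comp {I J K : finType} (a : linmap R J K) (b : linmap R I J) x :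
  lapp (lcomp a b) x = lapp a (lapp b x).
Proof.
apply/boolp.funext => k; rewrite /lapp /lcomp; under eq_bigr do rewrite mulr_suml.
rewrite exchange_big /=; apply: eq_bigr => j _.
by rewrite mulr_sumr; apply: eq_bigr => i _; rewrite mulrA.
Qed.

Lemma opnorm_le1_comp {I J K : finType} {a : linmap R J K} {b : linmap R I J} :
  opnorm_le1 a -> opnorm_le1 b -> opnorm_le1 (lcomp a b).
Proof.
by move=> a1 b1 x; rewrite lapp_comp; apply: le_trans (a1 _) (b1 x).
Qed.

Definition lid {I : finType} : linmap R I I := fun j i => (i == j)%:R.

Lemma lapp_id {I : finType} (x : I -> R) : lapp lid x = x.
Proof.
apply/boolp.funext => j.
rewrite /lapp /lid (bigD1 j) //= eqxx mul1r big1 ?addr0 // => i /negbTE ->.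
by rewrite mul0r.
Qed.

Lemma opnorm_le1_id {I : finType} : opnorm_le1 (@lid I).
Proof. by move=> x; rewrite lapp_id. Qed.

Definition hproj {L} (n : 'I_L -> nat) (k : 'I_L) : linmap R (hidx n) 'I_(n k) :=
  fun i p => (p == Tagged (ordF n) (i : ordF n k))%:R.

Lemma lapp_hproj {L} (n : 'I_L -> nat) k x :
  lapp (hproj n k) x = fun i => x (Tagged (ordF n) (i : ordF n k)).
Proof.
apply/boolp.funext => i.
rewrite /lapp /hproj (bigD1 (Tagged (ordF n) (i : ordF n k))) //= eqxx mul1r.
by rewrite big1 ?addr0 // => p /negbTE ->; rewrite mul0r.
Qed.

Lemma opnorm_le1_hproj {L} (n : 'I_L -> nat) k : opnorm_le1 (hproj n k).
Proof.
move=> x; apply: vnorm_le => [|i]; first exact: vnorm_ge0.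
by rewrite lapp_hproj vnorm_ge_abs.
Qed.

Definition stack {I : finType} {L} (n : 'I_L -> nat)
  (b : forall k : 'I_L, linmap R I 'I_(n k)) : linmap R I (hidx n) :=
  fun p i => b (tag p) (tagged p) i.

Lemma opnorm_le1_stack {I : finType} {L} (n : 'I_L -> nat) b :
  (forall k, opnorm_le1 (b k)) -> opnorm_le1 (@stack I L n b).
Proof.
move=> b1 x; apply: vnorm_le => [|p]; first exact: vnorm_ge0.
exact: le_trans (vnorm_ge_abs _ (tagged p)) (b1 (tag p) x).
Qed.

End Contractions.

Lemma le_ereal_inf_addr {R : realType} (A : set (\bar R)) (x c : \bar R) :
  (0 <= c)%E -> (forall y, A y -> 0 <= y)%E ->
  (forall y, A y -> x <= y + c)%E -> (x <= ereal_inf A + c)%E.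
Proof.
move=> c0 A0 xAc; case: c c0 xAc => [c | | //] c0 xAc.
  by rewrite -leeBlDr //; apply: le_ereal_inf_tmp => y Ay; rewrite leeBlDr ?xAc.
rewrite addey ?leey // gt_eqF // (lt_le_trans ltNy0) //.
exact: le_ereal_inf_tmp.
Qed.

Section FunctionNorm.
Context {R : realType} {Sigma : finType} (S : set (seq Sigma)).
Local Notation fnorm := (@fnorm R Sigma S).

Lemma fnorm_ge0 {I : finType} (f : seq Sigma -> I -> R) : (0 <= fnorm f)%E.
Proof. by apply: ereal_sup_ubound; left. Qed.

Lemma fnorm_ge_vnorm {I : finType} (f : seq Sigma -> I -> R) {s} :
  S s -> ((vnorm (f s))%:E <= fnorm f)%E.
Proof. by move=> Ss; apply: ereal_sup_ubound; right; exists s. Qed.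

Lemma fnorm_le {I : finType} (f : seq Sigma -> I -> R) (c : \bar R) :
  (0 <= c)%E -> (forall s, S s -> (vnorm (f s))%:E <= c)%E -> (fnorm f <= c)%E.
Proof. by move=> c0 fc; apply: ge_ereal_sup => _ [->|[s Ss <-]]; last exact: fc. Qed.

Lemma fnorm_distC {I : finType} (f g : seq Sigma -> I -> R) :
  fnorm (fun s i => (f s i - g s i)%R) = fnorm (fun s i => (g s i - f s i)%R).
Proof.
by congr ereal_sup; congr setU; apply: eq_imagel => s _; rewrite vnorm_distC.
Qed.

Definition ldist {I J : finType} (f : seq Sigma -> I -> R) (g : seq Sigma -> J -> R)
  : \bar R :=
  ereal_inf [set fnorm (fun s j => (lapp a (f s) j - g s j)%R)
            | a in [set a : linmap R I J | opnorm_le1 a]].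

Lemma ldist_le {I J : finType} {a : linmap R I J} f g :
  opnorm_le1 a -> (ldist f g <= fnorm (fun s j => (lapp a (f s) j - g s j)%R))%E.
Proof. by move=> a1; apply: ereal_inf_lbound; exists a. Qed.

Lemma ldist_le_fnorm {I : finType} (f g : seq Sigma -> I -> R) :
  (ldist f g <= fnorm (fun s i => (f s i - g s i)%R))%E.
Proof.
suff -> : (fun s i => (f s i - g s i)%R) = (fun s i => (lapp lid (f s) i - g s i)%R).
  exact: ldist_le opnorm_le1_id.
by apply/boolp.funext => s; rewrite lapp_id.
Qed.

Lemma ldist_ge0 {I J : finType} (f : seq Sigma -> I -> R) (g : seq Sigma -> J -> R) :
  (0 <= ldist f g)%E.
Proof. by apply: le_ereal_inf_tmp => _ [a _ <-]; exact: fnorm_ge0. Qed.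

Lemma ldist_triangle {I J K : finType} (f : seq Sigma -> I -> R)
    (g : seq Sigma -> J -> R) (h : seq Sigma -> K -> R) :
  (ldist f h <= ldist f g + ldist g h)%E.
Proof.
have compose a b : opnorm_le1 a -> opnorm_le1 b ->
    (ldist f h <= fnorm (fun s j => (lapp a (f s) j - g s j)%R)
                  + fnorm (fun s k => (lapp b (g s) k - h s k)%R))%E.
  move=> a1 b1; apply: le_trans (ldist_le f h (opnorm_le1_comp b1 a1)) _.
  apply: fnorm_le => [|s Ss]; first by rewrite adde_ge0 ?fnorm_ge0.
  rewrite lapp_comp.
  have ag := fnorm_ge_vnorm (fun s j => (lapp a (f s) j - g s j)%R) Ss.
  have bh := fnorm_ge_vnorm (fun s k => (lapp b (g s) k - h s k)%R) Ss.
  apply: le_trans (leeD ag bh); rewrite -EFinD lee_fin.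
  apply: le_trans (vnorm_distD _ (lapp b (g s)) _) _.
  by rewrite lerD2r opnorm_le1_dist.
apply: le_ereal_inf_addr => [||_ [a a1 <-]]; first exact: ldist_ge0.
  by move=> _ [a _ <-]; exact: fnorm_ge0.
rewrite addeC; apply: le_ereal_inf_addr => [||_ [b b1 <-]]; first exact: fnorm_ge0.
  by move=> _ [b _ <-]; exact: fnorm_ge0.
by rewrite addeC; exact: compose.
Qed.

End FunctionNorm.

Section Representations.
Context {R : realType} {Sigma : finType} (S : set (seq Sigma))
  (cons : forall K A : @cmodel Sigma, alignment K A -> Prop).

Lemma drepr_ldist {L1} {n1 : 'I_L1 -> nat} (R1 : @circ R Sigma L1 n1)
    {L2} {n2 : 'I_L2 -> nat} (R2 : @circ R Sigma L2 n2) :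
  drepr S R1 R2 = maxe (ldist S (Hcat R1) (Hcat R2)) (ldist S (Hcat R2) (Hcat R1)).
Proof. by congr maxe; congr ereal_inf; apply: eq_imagel => b _; exact: fnorm_distC. Qed.

Lemma is_repr_ldist {m} {n : 'I_m -> nat} (h : @LM R Sigma) (K : circ m n) o
    {L} {nR : 'I_L -> nat} (Rp : circ L nR) rho delta :
  is_repr S cons h K o Rp rho delta ->
  (ldist S (Hcat Rp) h <= delta%:E)%E /\ (ldist S h (Hcat Rp) <= delta%:E)%E.
Proof.
case=> _ [oR _] _ _ close.
have [a [_ [a1 _ ha _]]] := close oR.
have delta0 : 0 <= delta by rewrite -lee_fin; exact: le_trans (fnorm_ge0 _ _) (ltW ha).
split.
  apply: le_trans (ldist_le _ _ _ (opnorm_le1_comp a1 (opnorm_le1_hproj nR oR))) _.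
  apply: fnorm_le => [|s Ss]; first by rewrite lee_fin.
  rewrite lapp_comp lapp_hproj; apply: le_trans (ltW ha).
  exact: (fnorm_ge_vnorm _ (fun s i => (lapp a (csol Rp s oR) i - h s i)%R) Ss).
have encode k : exists b : linmap R 'I_#|Sigma| 'I_(nR k), opnorm_le1 b /\
    (fnorm S (fun s i => (lapp b (h s) i - csol Rp s k i)%R) < delta%:E)%E.
  by have [_ [b [_ b1 _ hb]]] := close k; exists b.
pose b k := sval (cid (encode k)).
have bP k : opnorm_le1 (b k) /\ _ := svalP (cid (encode k)).
apply: le_trans (ldist_le _ _ _ (opnorm_le1_stack nR b (fun k => (bP k).1))) _.
apply: fnorm_le => [|s Ss]; first by rewrite lee_fin.
rewrite lee_fin; apply: vnorm_le => // p.
apply: le_trans (vnorm_ge_abs (fun i => lapp (b (tag p)) (h s) i - csol Rp s (tag p) i)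
                              (tagged p)) _.
rewrite -lee_fin; apply: le_trans (ltW (bP (tag p)).2).
exact: (fnorm_ge_vnorm _ (fun s i => (lapp (b (tag p)) (h s) i - csol Rp s (tag p) i)%R) Ss).
Qed.

Lemma drepr_le_repr {L} {nR : 'I_L -> nat} (Rp : @circ R Sigma L nR)
    {h h' : @LM R Sigma} {m} {n : 'I_m -> nat} {K : circ m n} {o}
    {m'} {n' : 'I_m' -> nat} {K' : circ m' n'} {o'}
    {LQ} {nQ : 'I_LQ -> nat} {Q : circ LQ nQ} {rho delta}
    {LQ'} {nQ' : 'I_LQ' -> nat} {Q' : circ LQ' nQ'} {rho' delta' Delta} :
  is_repr S cons h K o Q rho delta -> is_repr S cons h' K' o' Q' rho' delta' ->
  (fnorm S (fun s i => (h s i - h' s i)%R) < Delta%:E)%E ->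
  (drepr S Rp Q <= drepr S Rp Q' + (delta + delta' + Delta)%:E)%E.
Proof.
move=> /is_repr_ldist [Qh hQ] /is_repr_ldist [Q'h' h'Q'] hh'.
have hh'_le : (ldist S h h' <= Delta%:E)%E.
  exact: le_trans (ldist_le_fnorm _ _ _) (ltW hh').
have h'h_le : (ldist S h' h <= Delta%:E)%E.
  by rewrite fnorm_distC in hh'; exact: le_trans (ldist_le_fnorm _ _ _) (ltW hh').
have Q'Q : (ldist S (Hcat Q') (Hcat Q) <= (delta + delta' + Delta)%:E)%E.
  apply: le_trans (ldist_triangle _ _ h' _) _.
  apply: le_trans (leeD Q'h' (le_trans (ldist_triangle _ _ h _) (leeD h'h_le hQ))) _.
  by rewrite -!EFinD lee_fin; lra.
have QQ' : (ldist S (Hcat Q) (Hcat Q') <= (delta + delta' + Delta)%:E)%E.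
  apply: le_trans (ldist_triangle _ _ h _) _.
  apply: le_trans (leeD Qh (le_trans (ldist_triangle _ _ h' _) (leeD hh'_le h'Q'))) _.
  by rewrite -!EFinD lee_fin; lra.
rewrite !drepr_ldist adde_maxl; apply: le_max2.
  exact: le_trans (ldist_triangle _ _ (Hcat Q') _) (leeD (lexx _) Q'Q).
rewrite addeC; exact: le_trans (ldist_triangle _ _ (Hcat Q') _) (leeD QQ' (lexx _)).
Qed.

End Representations.

Section Hausdorff.
Context {R : realType} {T : Type} {d : T -> T -> R}.
Hypothesis d_triangle : forall x y z, d x z <= d x y + d y z.

Lemma kappa_ge_dist {P : set T} {x y} : P x -> P y -> ((d x y)%:E <= kappa d P)%E.
Proof. by move=> Px Py; apply: ereal_sup_ubound; exists x => //; exists y. Qed.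

Lemma dHaus_le_kappa {P Q : set T} {x y} {c : \bar R} :
  P x -> Q y -> ((d x y)%:E <= c)%E ->
  (dHaus d P Q <= kappa d P + kappa d Q + c)%E.
Proof.
move=> Px Qy dxy.
have far F F' : P F -> Q F' -> ((d F F')%:E <= kappa d P + kappa d Q + c)%E.
  move=> PF QF'; rewrite addeAC.
  apply: le_trans (leeD (leeD (kappa_ge_dist PF Px) dxy) (kappa_ge_dist Qy QF')).
  by rewrite -!EFinD lee_fin (le_trans (d_triangle _ y _)) // lerD2r d_triangle.
rewrite /dHaus ge_max; apply/andP; split.
  apply: ge_ereal_sup => _ [F PF <-]; apply: le_trans (far F y PF Qy).
  by apply: ereal_inf_lbound; exists y.
apply: ge_ereal_sup => _ [F' QF' <-]; apply: le_trans (far x F' Px QF').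
by apply: ereal_inf_lbound; exists x.
Qed.

End Hausdorff.

Lemma ler_dist_proxies {R : realType} {E : normedModType R} {x y u v : E}
    {w : R} {D : \bar R} :
  `|x - u| < w -> `|y - v| < w -> (`|u - v|%:E <= D)%E ->
  (`|x - y|%:E <= (2 * w)%:E + D)%E.
Proof.
move=> xu yv uvD; apply: le_trans (leeD (lexx (2 * w)%:E) uvD).
rewrite -EFinD lee_fin; rewrite distrC in yv.
have := ler_distD u x y; have := ler_distD v u y; lra.
Qed.

Theorem theorem1
  (R : realType) (Sigma : finType) (S : set (seq Sigma))
  (cons : forall K A : @cmodel Sigma, alignment K A -> Prop)
  (* the two language models, Delta-close on S *)
  (h1 h2 : @LM R Sigma) (Delta : R) (hDelta : 0 < Delta)
  (hclose : (fnorm S (fun s i => (h1 s i - h2 s i)%R) < Delta%:E)%E)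
  (* circuits K_i of h_i *)
  (m1 : nat) (n1 : 'I_m1 -> nat) (K1 : circ m1 n1) (o1 : 'I_m1)
  (m2 : nat) (n2 : 'I_m2 -> nat) (K2 : circ m2 n2) (o2 : 'I_m2)
  (hK1 : is_circ_of S h1 K1 o1) (hK2 : is_circ_of S h2 K2 o2)
  (* (L_i, delta_i)-representations R_i of K_i through rho_i *)
  (L1 : nat) (nR1 : 'I_L1 -> nat) (R1 : circ L1 nR1)
  (rho1 : {set 'I_m1} -> 'I_L1) (delta1 : R)
  (hR1 : is_repr S cons h1 K1 o1 R1 rho1 delta1)
  (L2 : nat) (nR2 : 'I_L2 -> nat) (R2 : circ L2 nR2)
  (rho2 : {set 'I_m2} -> 'I_L2) (delta2 : R)
  (hR2 : is_repr S cons h2 K2 o2 R2 rho2 delta2)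
  (* eta_i-faithful interpretations A_i of K_i; alignment classes *)
  (A1 A2 : @cmodel Sigma) (eta1 eta2 : R)
  (Pi : set ({set 'I_m1} -> 'I_(cm_m A1)))
  (Pis : set ({set 'I_m1} -> 'I_(cm_m A2)))
  (pi1 : alignment (to_cm K1) A1) (hpi1 : Pi pi1)
  (hA1 : faithful_interp S cons A1 K1 o1 pi1 eta1)
  (pi2 : alignment (to_cm K2) A2)
  (hA2 : faithful_interp S cons A2 K2 o2 pi2 eta2)
  (* (i) distillation map Phi; (ii) Psi, omega; R_F under rho1 *)
  (E : normedModType R)
  (Phi : (seq Sigma -> forall j : 'I_m1, vec R (n1 j)) -> E)
  (Psi : (seq Sigma -> hidx nR1 -> R) -> E)
  (omega : R) (homega : 0 < omega)
  (RF : circ m1 n1 -> circ L1 nR1) (hRF1 : RF K1 = R1) :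
  let P1 := impls S cons n1 o1 A1 Pi eta1 in
  let P2 := impls S cons n1 o1 A2 Pis eta2 in
  let d := fun F F' : circ m1 n1 => `|Phi (csol F) - Phi (csol F')| in
  (forall F, (P1 `|` P2) F ->
     chain (RF F) /\ abstracts cons (to_cm F) (to_cm (RF F)) rho1) ->
  (forall f g : seq Sigma -> hidx nR1 -> R,
     (`|Psi f - Psi g|%:E <= fnorm S (fun s i => (f s i - g s i)%R))%E) ->
  (forall F F', (P1 `|` P2) F -> (P1 `|` P2) F' ->
     (`|Psi (Hcat (RF F)) - Psi (Hcat (RF F'))|%:E
        <= drepr S (RF F) (RF F'))%E) ->
  (forall F, (P1 `|` P2) F -> `|Phi (csol F) - Psi (Hcat (RF F))| < omega) ->
  (* (iii) *)
  (exists Fs, P2 Fs /\ is_repr S cons h1 Fs o1 (RF Fs) rho1 delta1) ->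
  (dHaus d P1 P2 <= kappa d P1 + kappa d P2 + (2 * omega)%:E
                    + drepr S R1 R2 + delta1%:E + delta2%:E + Delta%:E)%E.
Proof.
move=> P1 P2 d _ _ Psi_drepr Phi_Psi [Fs [P2Fs Fs_repr]].
have P1K1 : P1 K1 by exists pi1.
have Phi_Psi_K1 := Phi_Psi K1 (or_introl P1K1); rewrite hRF1 in Phi_Psi_K1.
have Phi_Psi_Fs := Phi_Psi Fs (or_intror P2Fs).
have Psi_K1_Fs := Psi_drepr K1 Fs (or_introl P1K1) (or_intror P2Fs).
rewrite hRF1 in Psi_K1_Fs.
have drepr_R1_Fs := drepr_le_repr S cons R1 Fs_repr hR2 hclose.
have dK1Fs : ((d K1 Fs)%:E <= (2 * omega)%:E + drepr S R1 R2
                              + delta1%:E + delta2%:E + Delta%:E)%E.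
  rewrite /d; apply: le_trans (ler_dist_proxies Phi_Psi_K1 Phi_Psi_Fs
                                 (le_trans Psi_K1_Fs drepr_R1_Fs)) _.
  by rewrite !EFinD !addeA.
have d_triangle F G H : d F H <= d F G + d G H by exact: ler_distD.
by apply: le_trans (dHaus_le_kappa d_triangle P1K1 P2Fs dK1Fs) _; rewrite !addeA.
Qed.
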